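(* Let $E$ be a finite set and let $\mathcal{Q}\subseteq 2^E$ be a weakly Rayleigh set-system. Then $\mathcal{Q}$ is a convex delta-matroid.
   Context: For a function $\omega:2^E\to[0,\infty)$, not identically zero, let $\mathbf{y}=\{y_e: e\in E\}$ be commuting indeterminates, $\mathbf{y}^S=\prod_{e\in S}y_e$, and $Z(\omega;\mathbf{y})=\sum_{S\subseteq E}\omega(S)\mathbf{y}^S$. For a multiaffine polynomial $Z$ write $Z^e=Z|_{y_e=0}$, $Z_e=\partial Z/\partial y_e$, $Z_{ef}=\partial^2 Z/\partial y_e\partial y_f$, and $\Delta Z\{e,f\}=Z_eZ_f-Z_{ef}Z$. $Z$ (or $\omega$) is Rayleigh if $\Delta Z\{e,f\}(\mathbf{y})\ge 0$ for all distinct $e,f\in E$ and all $\mathbf{y}$ with every $y_c>0$ (equivalently, under the probability measure $\mu(S)\propto\omega(S)\mathbf{y}^S$, the indicator variables of $e\in S$ and $f\in S$ have nonpositive covariance). The support is $\mathrm{Supp}(\omega)=\{S:\omega(S)>0\}$. A set-system $\mathcal{Q}\subseteq 2^E$ is weakly Rayleigh if there is a nonnegative $\omega$ with $\mathrm{Supp}(\omega)=\mathcal{Q}$ and $Z(\omega;\mathbf{y})$ Rayleigh. $\mathcal{Q}$ is convex if $S\subseteq T\subseteq S'$ with $S,S'\in\mathcal{Q}$ implies $T\in\mathcal{Q}$. $\mathcal{Q}$ is a delta-matroid if for all $A,B\in\mathcal{Q}$ and $e\in A\triangle B$ there is $f\in A\triangle B$ (possibly $f=e$) with $A\triangle\{e,f\}\in\mathcal{Q}$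 ($\triangle$ = symmetric difference). *)

From HB Require Import structures.
From mathcomp Require Import all_boot all_order all_algebra.
From mathcomp Require Import reals.
Set Implicit Arguments. Unset Strict Implicit. Unset Printing Implicit Defensive.
Import Order.TTheory GRing.Theory Num.Theory.
Local Open Scope ring_scope.

Section Rayleigh.
Variables (R : realType) (E : finType).
Implicit Types (w : {set E} -> R) (y : E -> R) (S : {set E}).

Definition ymon y S : R := \prod_(e in S) y e.

Definition Zpoly w y : R := \sum_(S : {set E}) w S * ymon y S.

(* Formal partial derivative of the multiaffine polynomial Z w.r.t. y_e:
   Z_e = sum_{S containing e} w(S) y^{S \ e}. *)
Definition Zd w (e : E) y : R :=
  \sum_(S : {set E} | e \in S) w S * ymon y (S :\ e).

(* Second partial derivative Z_{ef} (e <> f):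
   sum_{S containing e and f} w(S) y^{S \ {e,f}}. *)
Definition Zdd w (e f : E) y : R :=
  \sum_(S : {set E} | (e \in S) && (f \in S)) w S * ymon y (S :\: [set e; f]).

Definition DeltaZ w (e f : E) y : R :=
  Zd w e y * Zd w f y - Zdd w e f y * Zpoly w y.

Definition Rayleigh w : Prop :=
  forall e f : E, e != f ->
  forall y : E -> R, (forall c, 0 < y c) -> 0 <= DeltaZ w e f y.

Definition weakly_Rayleigh (Q : {set {set E}}) : Prop :=
  exists w : {set E} -> R,
    [/\ forall S, 0 <= w S,
        exists S, w S != 0,
        forall S, (0 < w S) <-> (S \in Q)
      & Rayleigh w].
End Rayleigh.

Definition symdiff (E : finType) (A B : {set E}) : {set E} :=
  (A :\: B) :|: (B :\: A).

Definition convex_setsys (E : finType) (Q : {set {set E}}) : Prop :=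
  forall S T S' : {set E}, S \in Q -> S' \in Q ->
    S \subset T -> T \subset S' -> T \in Q.

Definition delta_matroid (E : finType) (Q : {set {set E}}) : Prop :=
  forall A B : {set E}, A \in Q -> B \in Q ->
  forall e, e \in symdiff A B ->
    exists2 f, f \in symdiff A B & symdiff A [set e; f] \in Q.

(* Multiplying Delta Z{e,f} >= 0 by y_e y_f gives Z00 Z11 <= Z10 Z01, where Zab sums
   the terms whose monomial contains e iff a = 1 and f iff b = 1.  Substituting
   y_c = t ^ lam c and letting t grow turns this into a tropical inequality on the
   support: if U0 avoids e, f and U1 contains both, there are support sets Y (with e,
   without f) and Z (with f, without e) such that lam U0 + lam U1 <= lam Y + lam Z.
   Taking lam = 1, 0, -1 on B \ D, on D and elsewhere, lam X is |B \ D| minus the number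
   of points outside D where X differs from B.  Convexity follows by induction on the
   size of an interval [S, S'] (take B = S, D = S' \ S).  For the delta-matroid axiom
   take C in the support with e in A (+) C included in A (+) B and |A (+) C| minimal:
   then C is the only support set differing from C only inside (A (+) C) - e, and the
   inequality forbids two points of A (+) C on the same side of C, so A (+) C = {e, f}. *)

From HB Require Import structures.
From mathcomp Require Import all_boot all_order all_algebra.
From mathcomp Require Import reals.
From mathcomp Require Import ring.
Set Implicit Arguments. Unset Strict Implicit. Unset Printing Implicit Defensive.
Import Order.TTheory GRing.Theory Num.Theory.
Local Open Scope ring_scope.

Section RayleighInequality.
Variables (R : realType) (E : finType).
Implicit Types (w : {set E} -> R) (y : E -> R) (S U : {set E}) (p q : pred {set E}).

Definition Zsub w y p : R := \sum_(S | p S) w S * ymon y S.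

Lemma eq_Zsub w y p q : p =1 q -> Zsub w y p = Zsub w y q.
Proof. exact: eq_bigl. Qed.

Lemma Zsub_split w y p q :
  Zsub w y p = Zsub w y (fun S => p S && q S) + Zsub w y (fun S => p S && ~~ q S).
Proof. exact: bigID. Qed.

Lemma ymon_setD1 y S e : e \in S -> ymon y S = y e * ymon y (S :\ e).
Proof. by move=> eS; rewrite /ymon (big_setD1 _ eS). Qed.

Lemma mul_Zd w y e : y e * Zd w e y = Zsub w y (fun S => e \in S).
Proof.
by rewrite /Zd mulr_sumr; apply: eq_bigr => S eS; rewrite (ymon_setD1 _ eS) mulrCA.
Qed.

Lemma mul_Zdd w y e f : e != f ->
  y e * y f * Zdd w e f y = Zsub w y (fun S => (e \in S) && (f \in S)).
Proof.
move=> nef; rewrite /Zdd mulr_sumr; apply: eq_bigr => S /andP [eS fS].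
have fSe : f \in S :\ e by rewrite in_setD1 eq_sym nef.
rewrite (ymon_setD1 _ eS) (ymon_setD1 _ fSe) setDDl; ring.
Qed.

Lemma Rayleigh_Zsub_le w y e f : Rayleigh w -> e != f -> (forall c, 0 < y c) ->
  Zsub w y (fun S => (e \notin S) && (f \notin S)) *
  Zsub w y (fun S => (e \in S) && (f \in S)) <=
  Zsub w y (fun S => (e \in S) && (f \notin S)) *
  Zsub w y (fun S => (e \notin S) && (f \in S)).
Proof.
move=> Ray nef ypos; have := Ray e f nef y ypos.
set a := Zsub w y (fun S => (e \notin S) && (f \notin S)).
set b := Zsub w y (fun S => (e \in S) && (f \notin S)).
set c := Zsub w y (fun S => (e \notin S) && (f \in S)).
set d := Zsub w y (fun S => (e \in S) && (f \in S)).
have Ze : Zsub w y (fun S => e \in S) = b + d.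
  by rewrite (Zsub_split _ _ _ (fun S => f \in S)) addrC.
have Zne : Zsub w y (fun S => e \notin S) = a + c.
  by rewrite (Zsub_split _ _ _ (fun S => f \in S)) addrC.
have Zf : Zsub w y (fun S => f \in S) = c + d.
  rewrite (Zsub_split _ _ _ (fun S => e \in S)) addrC.
  by congr (_ + _); apply: eq_Zsub => S /=; rewrite andbC.
have Z : Zpoly w y = Zsub w y (fun S => e \in S) + Zsub w y (fun S => e \notin S).
  exact: Zsub_split w y xpredT (fun S => e \in S).
have Delta : y e * y f * DeltaZ w e f y = b * c - a * d.
  have -> : y e * y f * DeltaZ w e f y =
    (y e * Zd w e y) * (y f * Zd w f y) - (y e * y f * Zdd w e f y) * Zpoly w y.
    by rewrite /DeltaZ; ring.
  by rewrite !mul_Zd mul_Zdd // -/d Z Ze Zne Zf; ring.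
move=> DeltaZ_ge0; rewrite -subr_ge0 -Delta.
by rewrite mulr_ge0 // ltW ?mulr_gt0.
Qed.

Definition lsum (lam : E -> int) U : int := \sum_(c in U) lam c.

Lemma ymon_exprz (t : R) lam U : t != 0 ->
  ymon (fun c => t ^ lam c) U = t ^ lsum lam U.
Proof.
move=> t0; rewrite /ymon /lsum; symmetry.
by apply: (big_morph (fun z : int => t ^ z)) => // m n; rewrite expfzDr.
Qed.

Lemma Zsub_ge_term w y p U : (forall S, 0 <= w S) -> (forall c, 0 <= y c) -> p U ->
  w U * ymon y U <= Zsub w y p.
Proof.
move=> w0 y0 pU; rewrite /Zsub (bigD1 U) //= lerDl.
by apply: sumr_ge0 => S _; rewrite mulr_ge0 ?prodr_ge0.
Qed.

Lemma Zsub_exprz_mul_le w (t : R) lam p q (m : int) :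
  (forall S, 0 <= w S) -> 1 <= t ->
  (forall Y Z, p Y -> q Z -> 0 < w Y -> 0 < w Z -> lsum lam Y + lsum lam Z <= m) ->
  Zsub w (fun c => t ^ lam c) p * Zsub w (fun c => t ^ lam c) q <=
  (\sum_S w S) ^+ 2 * t ^ m.
Proof.
move=> w0 t1 bound_m; have t0 : t != 0 by rewrite gt_eqF // (lt_le_trans ltr01).
have sum_le (r : pred {set E}) : 0 <= \sum_(S | r S) w S <= \sum_S w S.
  by rewrite sumr_ge0 //= [leRHS](bigID r) lerDl sumr_ge0.
apply: (@le_trans _ _ ((\sum_(Y | p Y) w Y) * (\sum_(Z | q Z) w Z) * t ^ m)); last first.
  have /andP [p0 pW] := sum_le p; have /andP [q0 qW] := sum_le q.
  by rewrite ler_wpM2r ?exprz_ge0 ?(le_trans ler01) // expr2 ler_pM.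
rewrite /Zsub !big_distrlr /= mulr_suml; apply: ler_sum => Y pY.
rewrite mulr_suml; apply: ler_sum => Z qZ.
have := w0 Y; rewrite le_eqVlt => /predU1P [<-|wY]; first by rewrite !mul0r.
have := w0 Z; rewrite le_eqVlt => /predU1P [<-|wZ]; first by rewrite !(mul0r, mulr0).
rewrite !ymon_exprz // mulrACA -expfzDr // ler_pM2l ?mulr_gt0 //.
exact/ler_weXz2l/bound_m.
Qed.

Lemma Rayleigh_tropical_exchange w lam e f U0 U1 :
  (forall S, 0 <= w S) -> Rayleigh w -> e != f -> 0 < w U0 -> 0 < w U1 ->
  e \notin U0 -> f \notin U0 -> e \in U1 -> f \in U1 ->
  exists Y Z, [/\ 0 < w Y, 0 < w Z, (e \in Y) && (f \notin Y), (e \notin Z) && (f \in Z)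
    & lsum lam U0 + lsum lam U1 <= lsum lam Y + lsum lam Z].
Proof.
move=> w0 Ray nef wU0 wU1 eU0 fU0 eU1 fU1; set L := lsum lam U0 + lsum lam U1.
have [/existsP [Y /existsP [Z /and5P [wY wZ eY fZ le_L]]]|no_pair] := boolP
  [exists Y, exists Z, [&& 0 < w Y, 0 < w Z, (e \in Y) && (f \notin Y),
                           (e \notin Z) && (f \in Z) & L <= lsum lam Y + lsum lam Z]].
  by exists Y, Z.
have bound_L1 (Y Z : {set E}) : (e \in Y) && (f \notin Y) -> (e \notin Z) && (f \in Z) ->
    0 < w Y -> 0 < w Z -> lsum lam Y + lsum lam Z <= L - 1.
  move=> eY fZ wY wZ; rewrite -ltzD1 subrK ltNge.
  by move: no_pair; rewrite negb_exists => /forallP/(_ Y);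
     rewrite negb_exists => /forallP/(_ Z); rewrite wY wZ eY fZ.
exfalso; set W := \sum_S w S.
have wU : 0 < w U0 * w U1 by rewrite mulr_gt0.
(* large enough for w U0 * w U1 * t ^ L to beat the bound W ^+ 2 * t ^ (L - 1) *)
pose t := 1 + W ^+ 2 / (w U0 * w U1).
have t1 : 1 <= t by rewrite lerDl divr_ge0 ?sqr_ge0 ?ltW.
have tpos : 0 < t := lt_le_trans ltr01 t1.
pose y c := t ^ lam c.
have ypos c : 0 < y c by rewrite exprz_gt0.
have lower : w U0 * w U1 * t ^ L <=
    Zsub w y (fun S => (e \notin S) && (f \notin S)) *
    Zsub w y (fun S => (e \in S) && (f \in S)).
  rewrite expfzDr ?gt_eqF // mulrACA -!ymon_exprz ?gt_eqF //.
  have y0 c : 0 <= y c := ltW (ypos c).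
  have ymon0 U : 0 <= ymon y U by apply: prodr_ge0 => c _.
  apply: ler_pM; rewrite ?mulr_ge0 ?(ltW wU0) ?(ltW wU1) //.
    by apply: (Zsub_ge_term w0 y0); rewrite /= eU0.
  by apply: (Zsub_ge_term w0 y0); rewrite /= eU1.
have upper := Zsub_exprz_mul_le (p := fun S => (e \in S) && (f \notin S))
  (q := fun S => (e \notin S) && (f \in S)) w0 t1 bound_L1.
have := le_trans lower (le_trans (Rayleigh_Zsub_le Ray nef ypos) upper).
have tL : t ^ L = t * t ^ (L - 1) by rewrite -{1}(subrK 1 L) expfzDr ?gt_eqF // mulrC.
rewrite tL mulrA ler_pM2r ?exprz_gt0 // -/W /t mulrDr mulr1 mulrCA divff ?gt_eqF //.
by rewrite mulr1 gerDr leNgt wU.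
Qed.

End RayleighInequality.

Section SymmetricDifference.
Variable E : finType.
Implicit Types (A B D X : {set E}).

Lemma in_symdiff x A B : (x \in symdiff A B) = ((x \in A) != (x \in B)).
Proof. by rewrite !inE; case: (x \in A); case: (x \in B). Qed.

Lemma symdiffC A B : symdiff A B = symdiff B A.
Proof. by apply/setP => x; rewrite !in_symdiff eq_sym. Qed.

Lemma symdiffK A B : symdiff A (symdiff A B) = B.
Proof. by apply/setP => x; rewrite !in_symdiff; case: (x \in A); case: (x \in B). Qed.

Lemma symdiffxx A : symdiff A A = set0.
Proof. by apply/setP => x; rewrite in_symdiff eqxx inE. Qed.

Definition dist_outside D B X : nat := #|symdiff B X :\: D|.

Definition sign_weight D B (c : E) : int :=
  if c \in D then 0 else if c \in B then 1 else -1.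

Lemma sum_indicator_int A : \sum_c ((c \in A) : int) = #|A|%:Z.
Proof.
rewrite (eq_bigr (fun c => if c \in A then 1 else 0)); last by move=> c _; case: (c \in A).
by rewrite -big_mkcond sumr_const natz.
Qed.

Lemma lsum_sign_weight D B X :
  lsum (sign_weight D B) X = #|B :\: D|%:Z - (dist_outside D B X)%:Z.
Proof.
rewrite /lsum big_mkcond /= -!sum_indicator_int -sumrB; apply: eq_bigr => c _.
rewrite /sign_weight !inE.
by case: (c \in D); case: (c \in B); case: (c \in X).
Qed.

Lemma dist_outside_eq0 D B X : (dist_outside D B X == 0)%N = (symdiff B X \subset D).
Proof. by rewrite cards_eq0 setD_eq0. Qed.

Lemma dist_outside_center D B : dist_outside D B B = 0%N.
Proof. by rewrite /dist_outside symdiffxx set0D cards0. Qed.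

Lemma dist_outside_interval (S S' X : {set E}) : S \subset S' ->
  (dist_outside (S' :\: S) S X == 0)%N = (S \subset X) && (X \subset S').
Proof.
move=> /subsetP SS'; rewrite dist_outside_eq0.
apply/subsetP/andP => [sub | [/subsetP SX /subsetP XS'] x].
  split; apply/subsetP => x; have := sub x; have := SS' x;
    by rewrite in_symdiff !inE; case: (x \in S); case: (x \in X); case: (x \in S').
have := SX x; have := XS' x.
by rewrite in_symdiff !inE; case: (x \in S); case: (x \in X); case: (x \in S').
Qed.

End SymmetricDifference.

Definition exchange_property (E : finType) (Q : {set {set E}}) : Prop :=
  forall (D B U0 U1 : {set E}) (e f : E), e != f -> U0 \in Q -> U1 \in Q ->
  e \notin U0 -> f \notin U0 -> e \in U1 -> f \in U1 ->
  exists Y Z, [/\ Y \in Q, Z \in Q, (e \in Y) && (f \notin Y), (e \notin Z) && (f \in Z)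
    & dist_outside D B Y + dist_outside D B Z <= dist_outside D B U0 + dist_outside D B U1]%N.

Lemma weakly_Rayleigh_exchange (R : realType) (E : finType) (Q : {set {set E}}) :
  weakly_Rayleigh R Q -> exchange_property Q.
Proof.
case=> w [w0 _ suppQ Ray] D B U0 U1 e f nef /suppQ wU0 /suppQ wU1 eU0 fU0 eU1 fU1.
have [Y [Z [wY wZ eY fZ]]] := Rayleigh_tropical_exchange (sign_weight D B)
  w0 Ray nef wU0 wU1 eU0 fU0 eU1 fU1.
rewrite !lsum_sign_weight addrACA [in X in _ <= X]addrACA -!opprD lerD2l lerN2.
rewrite -!PoszD lez_nat => le_dist.
by exists Y, Z; split=> //; apply/suppQ.
Qed.

Section ExchangeConsequences.
Variables (E : finType) (Q : {set {set E}}).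
Hypothesis exQ : exchange_property Q.
Implicit Types (B D U X : {set E}).

Lemma exchange_convex : convex_setsys Q.
Proof.
move=> S T S'; have [n] := ubnP #|S' :\: S|.
elim: n S T S' => // n IH S T S' lt_n SQ S'Q ST TS'.
have shrink (A' : {set E}) :
    A' \subset S' :\: S -> (exists2 x, x \in S' :\: S & x \notin A') -> (#|A'| < n)%N.
  move=> sub [x xS xA']; apply: (@leq_trans #|S' :\: S|); last by rewrite -ltnS.
  by apply/proper_card/properP; split=> //; exists x.
have [->|TnS] := eqVneq T S; first by [].
have [->|TnS'] := eqVneq T S'; first by [].
have /subsetPn [e eT eS] : ~~ (T \subset S).
  by apply: contra TnS => TS; rewrite eqEsubset TS ST.
have /subsetPn [f fS' fT] : ~~ (S' \subset T).
  by apply: contra TnS' => S'T; rewrite eqEsubset TS' S'T.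
have nef : e != f by apply: contraNneq fT => <-.
have fS : f \notin S by apply: contra fT; apply: (subsetP ST).
have SS' := subset_trans ST TS'.
have [Y [Z [YQ _ /andP [eY fY] _ le_dist]]] :=
  exQ (S' :\: S) S nef SQ S'Q eS fS (subsetP TS' e eT) fS'.
have /eqP dS' : dist_outside (S' :\: S) S S' == 0%N.
  by rewrite dist_outside_interval // SS' subxx.
rewrite dist_outside_center dS' in le_dist.
have /andP [SY YS'] : (S \subset Y) && (Y \subset S').
  by rewrite -dist_outside_interval // -leqn0 (leq_trans _ le_dist) ?leq_addr.
have TYQ : T :&: Y \in Q.
  apply: (IH S _ Y) => //; rewrite ?subsetI ?ST ?SY ?subsetIr //.
  by apply: shrink; [exact: setSD | exists f; rewrite !inE ?fS ?fS' ?fY].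
have TUYQ : T :|: Y \in Q.
  apply: (IH Y _ S') => //; rewrite ?subsetUr ?subUset ?TS' ?YS' //.
  by apply: shrink; [exact: setDS | exists e; rewrite !inE ?eS ?eY ?(subsetP TS' e eT)].
apply: (IH (T :&: Y) _ (T :|: Y)) => //; rewrite ?subsetIl ?subsetUl //.
apply: shrink; last by exists e; rewrite !inE ?eS ?eT ?eY ?(subsetP TS' e eT).
apply/subsetP => x; move: (subsetP ST x) (subsetP SY x) (subsetP TS' x) (subsetP YS' x).
by rewrite !inE; case: (x \in S); case: (x \in T); case: (x \in Y); case: (x \in S').
Qed.

Lemma exchange_isolated_opposite D B U x y : B \in Q ->
  (forall X, X \in Q -> dist_outside D B X = 0%N -> X = B) ->
  U \in Q -> (dist_outside D B U <= 1)%N -> x != y ->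
  x \in symdiff U B -> y \in symdiff U B -> (x \in B) != (y \in B).
Proof.
move=> BQ isoB UQ distU nxy xUB yUB; apply/negP => /eqP xyB.
have [Y [Z [YQ ZQ xY yZ le_dist]]] : exists Y Z, [/\ Y \in Q, Z \in Q,
    (x \in Y) && (y \notin Y), (x \notin Z) && (y \in Z) &
    dist_outside D B Y + dist_outside D B Z <= dist_outside D B U + dist_outside D B B]%N.
  move: xUB yUB; rewrite !in_symdiff -xyB.
  case xB: (x \in B); rewrite ?eqb_id ?eqbF_neg ?negbK => xU yU.
    by apply: exQ; rewrite -?xyB.
  have yB : y \notin B by rewrite -xyB xB.
  have [Y [Z [YQ ZQ xY yZ le_dist]]] := exQ D B nxy BQ UQ (negbT xB) yB xU yU.
  by exists Y, Z; split=> //; rewrite [(dist_outside D B U + _)%N]addnC.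
rewrite dist_outside_center addn0 in le_dist.
have dist0 : (dist_outside D B Y == 0) || (dist_outside D B Z == 0).
  move: (leq_trans le_dist distU); case: (dist_outside D B Y) => // n.
  by rewrite addSn ltnS leqn0 addn_eq0 => /andP [_ ->]; rewrite orbT.
case/orP: dist0 => /eqP dist0.
  by move: xY; rewrite (isoB Y YQ dist0) xyB andbN.
by move: yZ; rewrite (isoB Z ZQ dist0) xyB andNb.
Qed.

Section MinimalSymdiff.
Variables (A C : {set E}) (e : E).
Hypotheses (AQ : A \in Q) (CQ : C \in Q) (eAC : e \in symdiff A C).
Hypothesis Cmin : forall X, X \in Q -> e \in symdiff A X ->
  symdiff A X \subset symdiff A C -> (#|symdiff A C| <= #|symdiff A X|)%N.

Lemma minimal_symdiff_isolated X :
  X \in Q -> dist_outside (symdiff A C :\ e) C X = 0%N -> X = C.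
Proof.
move=> XQ /eqP; rewrite dist_outside_eq0 => /subsetP CX_sub.
have sub : symdiff A X \subset symdiff A C.
  apply/subsetP => c; move: (CX_sub c); rewrite !in_symdiff in_setD1 in_symdiff.
  by case: (c \in A); case: (c \in C); case: (c \in X); rewrite ?andbF.
have eAX : e \in symdiff A X.
  move: (CX_sub e) eAC; rewrite !in_symdiff in_setD1 eqxx /=.
  by case: (e \in A); case: (e \in C); case: (e \in X) => // /(_ isT).
have /eqP eq_sd : symdiff A X == symdiff A C by rewrite eqEcard sub Cmin.
by rewrite -(symdiffK A X) eq_sd symdiffK.
Qed.

Lemma minimal_symdiff_pair : exists2 f, f \in symdiff A C & symdiff A C = [set e; f].
Proof.
have distA : (dist_outside (symdiff A C :\ e) C A <= 1)%N.
  rewrite /dist_outside [symdiff C A]symdiffC -(cards1 e).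
  apply/subset_leq_card/subsetP => c.
  by rewrite in_setD in_setD1 in_set1; case: eqP => //= _; rewrite andNb.
have opposite x y : x != y -> x \in symdiff A C -> y \in symdiff A C ->
    (x \in C) != (y \in C).
  move=> nxy xAC yAC.
  exact: exchange_isolated_opposite CQ minimal_symdiff_isolated AQ distA nxy xAC yAC.
have le1 : (#|symdiff A C :\ e| <= 1)%N.
  apply/card_le1_eqP => x y; rewrite !in_setD1 => /andP [nxe xAC] /andP [nye yAC].
  apply/eqP/contraT => nxy; move: (opposite _ _ nxy yAC xAC).
  (* among e, x and y two lie on the same side of C *)
  move: (opposite _ _ nxe xAC eAC) (opposite _ _ nye yAC eAC).
  by case: (x \in C); case: (y \in C); case: (e \in C).
have [empty|[f fACe]] := set_0Vmem (symdiff A C :\ e).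
  by exists e; rewrite // -(setD1K eAC) empty setU0 setUid.
have ACe : symdiff A C :\ e = [set f].
  by apply/eqP; rewrite eq_sym eqEcard sub1set fACe cards1.
by exists f; [move: fACe; rewrite in_setD1 => /andP [] | rewrite -(setD1K eAC) ACe].
Qed.

End MinimalSymdiff.

Lemma exchange_delta_matroid : delta_matroid Q.
Proof.
move=> A B AQ BQ e eAB.
pose P X := [&& X \in Q, e \in symdiff A X & symdiff A X \subset symdiff A B].
have PB : P B by rewrite /P BQ eAB subxx.
case: (arg_minnP (fun X => #|symdiff A X|) PB) => C /and3P [CQ eAC CB] Cmin.
have [X XQ eAX XC|f fAC ACef] := minimal_symdiff_pair AQ CQ eAC.
  by apply: Cmin; rewrite /P XQ eAX (subset_trans XC CB).
by exists f; [exact: (subsetP CB) | rewrite -ACef symdiffK].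
Qed.

End ExchangeConsequences.

Theorem theorem4p6 (R : realType) (E : finType) (Q : {set {set E}}) :
  weakly_Rayleigh R Q -> convex_setsys Q /\ delta_matroid Q.
Proof.
move=> /weakly_Rayleigh_exchange exQ.
by split; [exact: exchange_convex | exact: exchange_delta_matroid].
Qed.
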